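(* Let $K$ be a unital commutative ring, let $A$ be a $K$-algebra, and let $L,M\subseteq A$ be Lie ideals. Then $A[L,M]A\subseteq A[L,M]$. Moreover, if $L_0\subseteq L$ and $M_0\subseteq M$ are subsets and $m,n\in\mathbb{N}$ satisfy $[A,L_0]_1\subseteq \Sigma^n L_0$ and $[A,M_0]_1\subseteq \Sigma^m M_0$, then \[ A\cdot [L_0,M_0]_1\cdot A\subseteq \Sigma^{1+n+m}\big(A\cdot[L_0,M_0]_1\big). \]
   Context: $K$-algebras are associative and not necessarily unital. For $x,y\in A$, $[x,y]=xy-yx$. For subsets $X,Y\subseteq A$: $[X,Y]$ is the additive subgroup generated by all $[x,y]$ ($x\in X,y\in Y$); $XY$ is the additive subgroup generated by all $xy$ ($x\in X,y\in Y$), and $XYZ=(XY)Z$; $[X,Y]_1=\{[x,y]: x\in X,y\in Y\}$ is the set of commutators; $X\cdot Y=\{xy:x\in X,y\in Y\}$ is the set of products (and $X\cdot Y\cdot Z$ the set of triple products); $\Sigma^n X=\{x_1+\dots+x_n: x_i\in X\}$. A Lie ideal of $A$ is a $K$-linear subspace $L$ with $[A,L]\subseteq L$. *)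

From HB Require Import structures.
From mathcomp Require Import all_boot all_order all_algebra.
Set Implicit Arguments. Unset Strict Implicit. Unset Printing Implicit Defensive.
Import GRing.Theory.
Local Open Scope ring_scope.

(* A (not necessarily unital) associative K-algebra is given by a K-module A
   together with a bilinear associative multiplication [mul]. *)
Definition is_algebra_mul (K : comPzRingType) (A : lmodType K)
    (mul : A -> A -> A) : Prop :=
  [/\ forall x y z, mul (mul x y) z = mul x (mul y z),
      forall (k : K) x y z, mul (k *: x + y) z = k *: mul x z + mul y z
    & forall (k : K) x y z, mul x (k *: y + z) = k *: mul x y + mul x z].

Section Defs.
Variables (K : comPzRingType) (A : lmodType K) (mul : A -> A -> A).

Definition lbr (x y : A) : A := mul x y - mul y x.

Inductive addgen (S : A -> Prop) : A -> Prop :=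
  | addgen0 : addgen S 0
  | addgen_in x : S x -> addgen S x
  | addgenB x y : addgen S x -> addgen S y -> addgen S (x - y).

Definition brset (X Y : A -> Prop) : A -> Prop :=
  addgen (fun z => exists x y, [/\ X x, Y y & z = lbr x y]).

Definition prodset (X Y : A -> Prop) : A -> Prop :=
  addgen (fun z => exists x y, [/\ X x, Y y & z = mul x y]).

Definition brset1 (X Y : A -> Prop) : A -> Prop :=
  fun z => exists x y, [/\ X x, Y y & z = lbr x y].

Definition prodset1 (X Y : A -> Prop) : A -> Prop :=
  fun z => exists x y, [/\ X x, Y y & z = mul x y].

Definition sumset (n : nat) (X : A -> Prop) : A -> Prop :=
  fun z => exists f : 'I_n -> A, (forall i, X (f i)) /\ z = \sum_(i < n) f i.

Definition setA : A -> Prop := fun _ => True.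

Definition incl (X Y : A -> Prop) : Prop := forall x, X x -> Y x.

Definition lie_ideal (L : A -> Prop) : Prop :=
  [/\ L 0, (forall x y, L x -> L y -> L (x + y)),
      (forall (k : K) x, L x -> L (k *: x))
    & incl (brset setA L) L].

End Defs.

From Pilot Require Import Defs.
From mathcomp Require Import all_boot all_order all_algebra.
Set Implicit Arguments. Unset Strict Implicit. Unset Printing Implicit Defensive.
Import GRing.Theory.
Local Open Scope ring_scope.

(* Since ad b = [b, -] is a derivation, moving b from the right of [l, m] to
   the left costs two commutators:
     a [l, m] b = (a b) [l, m] - a [[b, l], m] - a [l, [b, m]].
   For Lie ideals L and M, [b, l] lies in L and [b, m] in M, so all three terms
   lie in A [L, M], and additivity extends this from generators to A [L, M] A.
   For the second statement the hypotheses write [b, l] and [b, m] as sums of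
   n elements of L0 and m elements of M0, which splits the last two terms into
   n + m products a' [l', m'] with l' in L0 and m' in M0. *)

Section Sums.
Variables (K : comPzRingType) (A : lmodType K).

Lemma morphB0 (f : A -> A) : {morph f : x y / x - y} -> f 0 = 0.
Proof. by move=> fB; rewrite -[in f _](subrr 0) fB subrr. Qed.

Lemma morphB_sum (f : A -> A) n (F : 'I_n -> A) :
  {morph f : x y / x - y} -> f (\sum_(i < n) F i) = \sum_(i < n) f (F i).
Proof.
move=> fB; have f0 := morphB0 fB.
have fN y : f (- y) = - f y by rewrite -sub0r fB f0 sub0r.
by apply: (big_morph f _ f0) => x y; rewrite -[in f _](opprK y) fB fN opprK.
Qed.

Lemma addgen_map (S T : A -> Prop) (f : A -> A) :
    {morph f : x y / x - y} -> (forall x, S x -> addgen T (f x)) ->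
  forall x, addgen S x -> addgen T (f x).
Proof.
move=> fB fST x; elim=> [|y /fST //|y z _ IHy _ IHz].
  by rewrite (morphB0 fB); apply: addgen0.
by rewrite fB; apply: addgenB.
Qed.

Lemma sumset1 (X : A -> Prop) x : X x -> sumset 1 X x.
Proof. by move=> Xx; exists (fun=> x); rewrite big_ord1. Qed.

Lemma sumsetD (X : A -> Prop) p q x y :
  sumset p X x -> sumset q X y -> sumset (p + q) X (x + y).
Proof.
move=> [f [Xf ->]] [g [Xg ->]].
exists (fun i => match split i with inl j => f j | inr k => g k end); split.
  by move=> i; case: (split i).
by rewrite big_split_ord; congr (_ + _); apply: eq_bigr => i _;
  rewrite ?(unsplitK (inl _)) ?(unsplitK (inr _)).
Qed.

Lemma sumset_map (X Y : A -> Prop) (f : A -> A) n x :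
    {morph f : x y / x - y} -> (forall x, X x -> Y (f x)) ->
  sumset n X x -> sumset n Y (f x).
Proof.
move=> fB fXY [g [Xg ->]].
by exists (f \o g); split=> [i|]; [apply: fXY | rewrite morphB_sum].
Qed.

End Sums.

Section Algebra.
Variables (K : comPzRingType) (A : lmodType K) (mul : A -> A -> A).
Hypothesis mulP : is_algebra_mul mul.

Local Notation lbr := (lbr mul).

Lemma amulA x y z : mul (mul x y) z = mul x (mul y z).
Proof. by case: mulP. Qed.

Lemma amulBl x y z : mul (x - y) z = mul x z - mul y z.
Proof.
case: mulP => _ mulDl _.
by rewrite -[in mul x z](subrK y x) -[x - y]scale1r mulDl !scale1r addrK.
Qed.

Lemma amulBr x y z : mul z (x - y) = mul z x - mul z y.
Proof.
case: mulP => _ _ mulDr.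
by rewrite -[in mul z x](subrK y x) -[x - y]scale1r mulDr !scale1r addrK.
Qed.

Lemma amulDr x y z : mul z (x + y) = mul z x + mul z y.
Proof. by case: mulP => _ _ mulDr; rewrite -[x]scale1r mulDr !scale1r. Qed.

Lemma amulNl x z : mul (- x) z = - mul x z.
Proof.
have mul0l : mul 0 z = 0 by rewrite -[in mul _ z](subrr 0) amulBl subrr.
by rewrite -sub0r amulBl mul0l sub0r.
Qed.

Lemma lbrBl x y z : lbr (x - y) z = lbr x z - lbr y z.
Proof. by rewrite /Defs.lbr amulBl amulBr !opprD addrACA. Qed.

Lemma lbrBr x y z : lbr z (x - y) = lbr z x - lbr z y.
Proof. by rewrite /Defs.lbr amulBl amulBr !opprD addrACA. Qed.

Lemma lbr_mulr b x y : lbr b (mul x y) = mul (lbr b x) y + mul x (lbr b y).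
Proof. by rewrite /Defs.lbr amulBl amulBr !amulA addrA subrK. Qed.

Lemma lbr_jacobi b x y : lbr b (lbr x y) = lbr (lbr b x) y + lbr x (lbr b y).
Proof.
rewrite [lbr x y]/Defs.lbr lbrBr !lbr_mulr [mul (lbr b y) x + _]addrC.
by rewrite opprD addrACA.
Qed.

Lemma amul_mulr_lbr a b z : mul a (mul z b) = mul (mul a b) z - mul a (lbr b z).
Proof. by rewrite amulA -amulBr [lbr b z]/Defs.lbr opprB addrC subrK. Qed.

Lemma amul_lbr_expand a b l m :
  mul a (mul (lbr l m) b)
  = mul (mul a b) (lbr l m) - mul a (lbr (lbr b l) m) - mul a (lbr l (lbr b m)).
Proof. by rewrite amul_mulr_lbr lbr_jacobi amulDr opprD addrA. Qed.

Lemma lie_ideal_brset1 L : lie_ideal mul L -> incl (brset1 mul (@setA _ A) L) L.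
Proof. by case=> _ _ _ adL x Lx; apply/adL/addgen_in. Qed.

Section IdealProduct.
Variables L M : A -> Prop.
Hypotheses (adL : incl (brset1 mul (@setA _ A) L) L)
           (adM : incl (brset1 mul (@setA _ A) M) M).

Local Notation ALM := (prodset mul (@setA _ A) (brset mul L M)).

Lemma amul_lbr_in a l m : L l -> M m -> ALM (mul a (lbr l m)).
Proof.
by move=> Ll Mm; apply: addgen_in; exists a, (lbr l m); split=> //;
  apply: addgen_in; exists l, m.
Qed.

Lemma amul_lbr_mul_in a b l m : L l -> M m -> ALM (mul a (mul (lbr l m) b)).
Proof.
move=> Ll Mm; rewrite amul_lbr_expand; apply: addgenB; first apply: addgenB.
- exact: amul_lbr_in.
- by apply: amul_lbr_in => //; apply: adL; exists b, l.
- by apply: amul_lbr_in => //; apply: adM; exists b, m.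
Qed.

Lemma amul_brset_mul_in a b z : brset mul L M z -> ALM (mul a (mul z b)).
Proof.
move: z; apply: (addgen_map (f := fun z => mul a (mul z b))).
  by move=> x y; rewrite /= amulBl amulBr.
by move=> _ [l [m [Ll Mm ->]]]; apply: amul_lbr_mul_in.
Qed.

Lemma prodset_brset_mulr_closed : incl (prodset mul ALM (@setA _ A)) ALM.
Proof.
apply: (addgen_map (f := id)) => // _ [y [b [ALMy _ ->]]].
move: y ALMy; apply: (addgen_map (f := fun y => mul y b)).
  by move=> x y; rewrite /= amulBl.
by move=> _ [a [z [_ LMz ->]]]; rewrite amulA; apply: amul_brset_mul_in.
Qed.

End IdealProduct.

Section CommutatorSums.
Variables (L0 M0 : A -> Prop) (n m : nat).
Hypotheses (adL0 : incl (brset1 mul (@setA _ A) L0) (sumset n L0))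
           (adM0 : incl (brset1 mul (@setA _ A) M0) (sumset m M0)).

Local Notation AL0M0 := (prodset1 mul (@setA _ A) (brset1 mul L0 M0)).

Lemma amul_lbr1_in a l k : L0 l -> M0 k -> AL0M0 (mul a (lbr l k)).
Proof. by move=> L0l M0k; exists a, (lbr l k); split=> //; exists l, k. Qed.

Lemma prodset1_brset1_mulr :
  incl (prodset1 mul AL0M0 (@setA _ A)) (sumset (1 + n + m) AL0M0).
Proof.
move=> _ [_ [b [[a [_ [_ [l [k [L0l M0k ->]]] ->]]] _ ->]]].
rewrite amulA amul_lbr_expand -!amulNl.
apply: sumsetD; first apply: sumsetD.
- exact/sumset1/amul_lbr1_in.
- apply: (sumset_map (X := L0) (f := fun x => mul (- a) (lbr x k))).
  + by move=> x y; rewrite /= lbrBl amulBr.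
  + by move=> x L0x /=; apply: amul_lbr1_in.
  + by apply: adL0; exists b, l.
- apply: (sumset_map (X := M0) (f := fun y => mul (- a) (lbr l y))).
  + by move=> x y; rewrite /= lbrBr amulBr.
  + by move=> y M0y /=; apply: amul_lbr1_in.
  + by apply: adM0; exists b, k.
Qed.

End CommutatorSums.

End Algebra.

Theorem lemma3p1 (K : comPzRingType) (A : lmodType K) (mul : A -> A -> A)
    (Hmul : is_algebra_mul mul) (L M : A -> Prop)
    (HL : lie_ideal mul L) (HM : lie_ideal mul M) :
  incl (prodset mul (prodset mul (@setA _ A) (brset mul L M)) (@setA _ A))
         (prodset mul (@setA _ A) (brset mul L M))
  /\
  (forall (L0 M0 : A -> Prop) (m n : nat),
     incl L0 L -> incl M0 M ->
     incl (brset1 mul (@setA _ A) L0) (sumset n L0) ->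
     incl (brset1 mul (@setA _ A) M0) (sumset m M0) ->
     incl (prodset1 mul (prodset1 mul (@setA _ A) (brset1 mul L0 M0)) (@setA _ A))
            (sumset (1 + n + m) (prodset1 mul (@setA _ A) (brset1 mul L0 M0)))).
Proof.
split.
  exact: prodset_brset_mulr_closed (lie_ideal_brset1 HL) (lie_ideal_brset1 HM).
by move=> L0 M0 m n _ _; apply: prodset1_brset1_mulr.
Qed.
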